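(* Let $E_0\subset D(0,1)\setminus\{0\}$, $E_\infty\subset\mathbb{C}\setminus\overline{D}(0,1)$ be finite and let $\widetilde a\in\Sigma_0\setminus\widetilde{E_0}$. The natural transformation $\Gamma_{0,\widetilde a}$ given on objects of $\mathcal{C}_{E_0,E_\infty}$ by $(A_0,A_1,A_\infty,\widetilde{M_0},\widetilde{M_\infty})\mapsto\widetilde{M_0}(\widetilde a)$ is an isomorphism of tensor functors from $\omega_0$ to $\omega_1^{(\widetilde a)}$, i.e. an element of $\mathrm{Iso}^\otimes(\omega_0,\omega_1^{(\widetilde a)})$.
   Context: Fix an integer $p\ge2$. Let $\widetilde{\mathbb{C}^\star}=\{(re^{ib},b): r>0, b\in\mathbb{R}\}$, $\widetilde1=(1,0)$, $\widetilde{\log}(re^{ib},b)=\log r+ib$, $\pi=\exp\circ\widetilde{\log}$, $\phi_p(re^{ib},b)=(r^pe^{ipb},pb)$; $\phi_p(W)=W\circ\phi_p$, $\pi^\star W=W\circ\pi$. $\Sigma_0=\{(re^{ib},b):0<r<1\}$, $\Sigma_\infty=\{(re^{ib},b):r>1\}$. Objects of the category $\mathcal{C}$ of rank $n$: tuples $(A_0,A_1,A_\infty,\widetilde{M_0},\widetilde{M_\infty})$ with $A_i\in GL_n(\mathbb{C})$, $\widetilde{M_0}\in GL_n(\mathcal{M}(\Sigma_0))$, $\widetilde{M_\infty}\in GL_n(\mathcal{M}(\Sigma_\infty))$, $\phi_p(\widetilde{M_0})=A_1\widetilde{M_0}A_0^{-1}$, $\phi_p(\widetilde{M_\infty})=A_1\widetilde{M_\infty}A_\infty^{-1}$,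 such that there are $\widetilde{W_1}\in GL_n(\mathcal{M}(\widetilde{\mathbb{C}^\star}))$, $W_0\in GL_n(\mathcal{M}(D(0,1)))$, $W_\infty\in GL_n(\mathcal{M}(\mathbb{P}^1(\mathbb{C})\setminus\overline{D}(0,1)))$ with $\widetilde{W_1}\widetilde{M_0}=\pi^\star W_0$, $\widetilde{W_1}\widetilde{M_\infty}=\pi^\star W_\infty$. Morphisms to $(B_0,B_1,B_\infty,\widetilde{N_0},\widetilde{N_\infty})$: triples $(S_0,\widetilde{S_1},S_\infty)$ with $S_0,S_\infty$ constant, $\widetilde{S_1}$ with entries Laurent polynomials in $\widetilde{\log}$, $S_0A_0=B_0S_0$, $\phi_p(\widetilde{S_1})A_1=B_1\widetilde{S_1}$, $S_\infty A_\infty=B_\infty S_\infty$, $\widetilde{S_1}\widetilde{M_0}=\widetilde{N_0}S_0$, $\widetilde{S_1}\widetilde{M_\infty}=\widetilde{N_\infty}S_\infty$; tensor product is componentwise Kronecker product. The fibre functors $\omega_0$ and $\omega_1^{(\widetilde a)}$ send a rank $n$ object to $\mathbb{C}^n$ and a morphism to $S_0$, resp. $\widetilde{S_1}(\widetilde a)$. For finite $E\subset\mathbb{C}^\star$, $E^{p^k}=\{z^{p^k}:z\in E\}$ ($k\ge0$), $E^{p^k}=\{z:z^{p^{-k}}\in E\}$ ($k<0$), $\widetilde E=\pi^{-1}(\bigcup_kE^{p^k})$. The singular locus $S(M)$ is the set of poles of $M$ together with zeros of $\det M$. $\mathcal{C}_{E_0,E_\infty}$ is the full subcategory of objects with $S(\widetilde{M_0})\subset\widetilde{E_0}$,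 $S(\widetilde{M_\infty})\subset\widetilde{E_\infty}$, and $\omega_0,\omega_1^{(\widetilde a)}$ are restricted to it. *)

From HB Require Import structures.
From mathcomp Require Import all_boot all_order all_algebra.
From mathcomp Require Import all_classical all_reals all_analysis.
From mathcomp Require Import complex mxtens.
Set Implicit Arguments.
Unset Strict Implicit.
Unset Printing Implicit Defensive.
Import Order.TTheory GRing.Theory Num.Theory.
Import numFieldNormedType.Exports.
Local Open Scope ring_scope.
Local Open Scope complex_scope.
Local Open Scope classical_set_scope.

Section Defs.
Variable R : realType.
Local Notation C := R[i].

(* Coordinates.  A point  a~ = (r e^{ib}, b)  of the universal cover   *)
(* C~* is represented by its coordinate  w = log~ a~ = log r + i b.    *)
(* This is a bijection C~* -> C; in these coordinates                   *)
(*   pi = exp,  phi_p(w) = p w,  1~ = 0,                               *)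
(*   Sigma_0 = {Re w < 0},  Sigma_oo = {Re w > 0}.                      *)

Definition cexp (w : C) : C :=
  (expR (complex.Re w) * cos (complex.Im w)) +i*
  (expR (complex.Re w) * sin (complex.Im w)).

Definition Sigma0 : set C := [set w | complex.Re w < 0].
Definition SigmaInf : set C := [set w | 0 < complex.Re w].
Definition Ctilde : set C := setT.
(* open unit disc D(0,1) and {|z| > 1} = P^1(C) \ closed disc, finite part *)
Definition D01 : set C := [set z | `|z| < 1].
Definition Dext : set C := [set z | 1 < `|z|].

Definition holo_at (f : C -> C) (z : C) : Prop :=
  derivable (f : C^o -> C^o) z 1.

Definition is_pole (f : C -> C) (p : C) : Prop :=
  forall M : R, \forall w \near dnbhs (p : C^o), M%:C <= `|f w|.

Definition discrete_in (U : set C) (P : set C) : Prop :=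
  forall z, U z -> \forall w \near dnbhs (z : C^o), ~ P w.

(* f (a total function, values at poles irrelevant) is meromorphic on
   the open set U: its poles in U form a discrete subset of U and it is
   holomorphic at every other point of U *)
Definition meromorphic (U : set C) (f : C -> C) : Prop :=
  discrete_in U [set z | U z /\ is_pole f z] /\
  forall z, U z -> ~ is_pole f z -> holo_at f z.

(* meromorphic at every point of P^1(C) \ closed disc, including oo *)
Definition meromorphic_ext (f : C -> C) : Prop :=
  meromorphic Dext f /\
  exists c : C, meromorphic D01 (fun u => if u == 0 then c else f u^-1).

(* equality of meromorphic functions on U: agreement off a discrete set *)
Definition mero_eq (U : set C) (f g : C -> C) : Prop :=
  exists P : set C, discrete_in U P /\ forall z, U z -> ~ P z -> f z = g z.

Definition mx_mero_eq m n (U : set C) (F G : C -> 'M[C]_(m, n)) : Prop :=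
  forall i j, mero_eq U (fun z => F z i j) (fun z => G z i j).

Definition mx_pole n (M : C -> 'M[C]_n) (z : C) : Prop :=
  exists i j, is_pole (fun w => M w i j) z.

Definition singular n (U : set C) (M : C -> 'M[C]_n) : set C :=
  [set z | U z /\ (mx_pole M z \/ \det (M z) = 0)].

(* M in GL_n(M(U)) for a connected open U: meromorphic entries and
   det M not the zero meromorphic function *)
Definition mx_GL n (U : set C) (M : C -> 'M[C]_n) : Prop :=
  (forall i j, meromorphic U (fun z => M z i j)) /\
  exists z, U z /\ ~ mx_pole M z /\ \det (M z) != 0.

Definition mx_GL_ext n (M : C -> 'M[C]_n) : Prop :=
  (forall i j, meromorphic_ext (fun z => M z i j)) /\
  exists z, Dext z /\ ~ mx_pole M z /\ \det (M z) != 0.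

(* z in U_{k in Z} E^{p^k} *)
Definition Epow (p : nat) (E : seq C) (z : C) : Prop :=
  exists k : nat, (exists2 e, e \in E & z = e ^+ (p ^ k)) \/ z ^+ (p ^ k) \in E.

Definition Etilde (p : nat) (E : seq C) : set C := [set w | Epow p E (cexp w)].

Record obj (n : nat) := Obj {
  oA0 : 'M[C]_n; oA1 : 'M[C]_n; oAinf : 'M[C]_n;
  oM0 : C -> 'M[C]_n;
  oMinf : C -> 'M[C]_n }.

Definition is_obj (p : nat) n (X : obj n) : Prop :=
  [/\ oA0 X \in unitmx, oA1 X \in unitmx, oAinf X \in unitmx,
      mx_GL Sigma0 (oM0 X) & mx_GL SigmaInf (oMinf X)] /\
  [/\
      mx_mero_eq Sigma0 (fun w => oM0 X (p%:R * w))
                        (fun w => oA1 X *m oM0 X w *m invmx (oA0 X)),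
      mx_mero_eq SigmaInf (fun w => oMinf X (p%:R * w))
                        (fun w => oA1 X *m oMinf X w *m invmx (oAinf X)) &
      exists (W1 W0 Winf : C -> 'M[C]_n),
        [/\ mx_GL Ctilde W1, mx_GL D01 W0, mx_GL_ext Winf,
            mx_mero_eq Sigma0 (fun w => W1 w *m oM0 X w) (fun w => W0 (cexp w)) &
            mx_mero_eq SigmaInf (fun w => W1 w *m oMinf X w) (fun w => Winf (cexp w))]].

Definition in_CE (p : nat) (E0 Einf : seq C) n (X : obj n) : Prop :=
  [/\ is_obj p X, singular Sigma0 (oM0 X) `<=` Etilde p E0 &
      singular SigmaInf (oMinf X) `<=` Etilde p Einf].

(* Laurent polynomials in log~ with m x n matrix coefficients:
   w |-> sum_{k=0}^{2N} c_k w^(k-N) *)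
Record laurent (m n : nat) := Laurent { lN : nat; lc : nat -> 'M[C]_(m, n) }.

Definition leval m n (L : laurent m n) (w : C) : 'M[C]_(m, n) :=
  \sum_(k < (lN L).*2.+1) (w ^ (k%:Z - (lN L)%:Z)) *: lc L k.

Record hom (n m : nat) := Hom {
  hS0 : 'M[C]_(m, n); hS1 : laurent m n; hSinf : 'M[C]_(m, n) }.

Definition is_hom (p : nat) n m (X : obj n) (Y : obj m) (f : hom n m) : Prop :=
  [/\ hS0 f *m oA0 X = oA0 Y *m hS0 f,
      forall w : C, w != 0 ->
        leval (hS1 f) (p%:R * w) *m oA1 X = oA1 Y *m leval (hS1 f) w,
      hSinf f *m oAinf X = oAinf Y *m hSinf f,
      mx_mero_eq Sigma0 (fun w => leval (hS1 f) w *m oM0 X w)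
                        (fun w => oM0 Y w *m hS0 f) &
      mx_mero_eq SigmaInf (fun w => leval (hS1 f) w *m oMinf X w)
                        (fun w => oMinf Y w *m hSinf f)].

Definition otensor n m (X : obj n) (Y : obj m) : obj (n * m) :=
  Obj (oA0 X *t oA0 Y) (oA1 X *t oA1 Y) (oAinf X *t oAinf Y)
      (fun w => oM0 X w *t oM0 Y w) (fun w => oMinf X w *t oMinf Y w).

Definition ounit : obj 1 := Obj 1 1 1 (fun _ => 1) (fun _ => 1).

Definition omega0 n m (f : hom n m) : 'M[C]_(m, n) := hS0 f.
Definition omega1 (a : C) n m (f : hom n m) : 'M[C]_(m, n) := leval (hS1 f) a.

Definition iso_tensor (p : nat) (E0 Einf : seq C) (a : C)
    (lam : forall n, obj n -> 'M[C]_n) : Prop :=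
  [/\ (forall n (X : obj n), in_CE p E0 Einf X -> lam n X \in unitmx),
      (forall n m (X : obj n) (Y : obj m) (f : hom n m),
          in_CE p E0 Einf X -> in_CE p E0 Einf Y -> is_hom p X Y f ->
          omega1 a f *m lam n X = lam m Y *m omega0 f),
      (forall n m (X : obj n) (Y : obj m),
          in_CE p E0 Einf X -> in_CE p E0 Einf Y ->
          lam (n * m)%N (otensor X Y) = lam n X *t lam m Y) &
      lam 1%N ounit = 1].

Definition Gamma0 (a : C) : forall n, obj n -> 'M[C]_n := fun n X => oM0 X a.

End Defs.

From Pilot Require Import Defs.
From HB Require Import structures.
From mathcomp Require Import all_boot all_order all_algebra.
From mathcomp Require Import all_classical all_reals all_analysis.
From mathcomp Require Import complex mxtens.
Set Implicit Arguments.
Unset Strict Implicit.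
Unset Printing Implicit Defensive.
Import Order.TTheory GRing.Theory Num.Theory.
Import numFieldNormedType.Exports.
Local Open Scope ring_scope.
Local Open Scope complex_scope.
Local Open Scope classical_set_scope.

(* Since a is outside E0~, it is a regular point of
   every M0: M0 has no pole there, so it is continuous at a, and det M0(a) is
   nonzero, so Gamma0 is invertible.  Naturality is the meromorphic identity
   S1 M0_X = M0_Y S0 on Sigma0 evaluated at a: both sides are continuous at a
   (S1 is a Laurent polynomial and a <> 0) and they agree off a discrete set,
   hence at a. *)

Lemma continuous_sum (T : topologicalType) (K : numFieldType)
    (V : normedModType K) (I : Type) (r : seq I) (f : I -> T -> V) (x : T) :
  (forall i, {for x, continuous (f i)}) ->
  {for x, continuous (fun y => \sum_(i <- r) f i y)}.
Proof.
move=> fx; apply: cvg_big => [z|i _]; last exact: fx.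
by apply: cvgD; [exact: cvg_fst | exact: cvg_snd].
Qed.

Lemma continuous_exprn (K : numFieldType) (n : nat) (a : K^o) :
  {for a, continuous (fun w : K^o => w ^+ n)}.
Proof.
elim: n => [|n IHn].
  have -> : (fun w : K^o => w ^+ 0) = cst 1 by apply/funext => w.
  exact: cst_continuous.
have -> : (fun w : K^o => w ^+ n.+1) = (fun w => w * w ^+ n).
  by apply/funext => w; rewrite exprS.
exact: continuousM.
Qed.

Lemma continuous_exprz (K : numFieldType) (z : int) (a : K^o) : a != 0 ->
  {for a, continuous (fun w : K^o => w ^ z)}.
Proof.
move=> a0; case: z => n; first exact: continuous_exprn.
by apply: continuousV; [rewrite expf_neq0 | exact: continuous_exprn].
Qed.

Section Gamma0.
Variable R : realType.
Local Notation C := R[i].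

Lemma open_Sigma0 : open (@Sigma0 R : set C^o).
Proof.
rewrite openE => a a_lt0; apply/nbhs_ballP.
exists (- complex.Re a)%:C; first by rewrite /= ltcR oppr_gt0.
move=> w; rewrite -ball_normE /= => aw_lt; rewrite /Sigma0 /=.
have : `|complex.Re (w - a)|%:C < (- complex.Re a)%:C.
  by apply: le_lt_trans aw_lt; rewrite -normrN opprB normc_ge_Re.
rewrite ltcR raddfB /= => /ltr_normlP[_].
by rewrite ltrBlDr addNr.
Qed.

Lemma Sigma0_neq0 (a : C) : Sigma0 a -> a != 0.
Proof. by apply: contraTneq => ->; rewrite /Sigma0 /= ltxx. Qed.

Lemma holo_at_continuous (f : C -> C) (z : C) :
  holo_at f z -> {for (z : C^o), continuous (f : C^o -> C^o)}.
Proof. by move=> /derivable1_diffP /differentiable_continuous. Qed.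

Lemma mero_eq_at (U : set C) (f g : C -> C) (a : C) :
  open (U : set C^o) -> U a -> mero_eq U f g ->
  {for (a : C^o), continuous (f : C^o -> C^o)} ->
  {for (a : C^o), continuous (g : C^o -> C^o)} -> f a = g a.
Proof.
rewrite openE => Uo Ua [P [Pdisc eqfg]] fa ga.
have eqfg_near : \forall w \near (a : C^o)^', f w = g w.
  near=> w; apply: eqfg; last by near: w; exact: Pdisc.
  by near: w; apply: nbhs_dnbhs; exact: Uo.
have dnbhs_proper := Proper_dnbhs_numFieldType (a : C^o).
apply: (@norm_cvg_unique _ _ ((g : C^o -> C^o) @ (a : C^o)^')).
  apply: cvg_trans (near_eq_cvg eqfg_near) _.
  exact: (@continuous_withinNx C^o C^o f a).1 fa.
exact: (@continuous_withinNx C^o C^o g a).1 ga.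
Unshelve. all: by end_near.
Qed.

Definition mx_continuous_at m n (F : C -> 'M[C]_(m, n)) (a : C) : Prop :=
  forall i j, {for (a : C^o), continuous (fun w : C^o => F w i j : C^o)}.

Lemma mx_mero_eq_at m n (U : set C) (F G : C -> 'M[C]_(m, n)) (a : C) :
  open (U : set C^o) -> U a -> mx_mero_eq U F G ->
  mx_continuous_at F a -> mx_continuous_at G a -> F a = G a.
Proof.
move=> Uo Ua eqFG Fa Ga; apply/matrixP => i j.
exact: (mero_eq_at Uo Ua (eqFG i j) (Fa i j) (Ga i j)).
Qed.

Lemma mx_continuous_at_cst m n (A : 'M[C]_(m, n)) (a : C) :
  mx_continuous_at (fun=> A) a.
Proof. by move=> i j; exact: cst_continuous. Qed.

Lemma mx_continuous_at_mul m n k (F : C -> 'M[C]_(m, n)) (G : C -> 'M[C]_(n, k))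
    (a : C) :
  mx_continuous_at F a -> mx_continuous_at G a ->
  mx_continuous_at (fun w => F w *m G w) a.
Proof.
move=> Fa Ga i j.
have -> : (fun w => (F w *m G w) i j) = fun w => \sum_l F w i l * G w l j.
  by apply/funext => w; rewrite mxE.
by apply: continuous_sum => l; exact: continuousM.
Qed.

Lemma leval_continuous_at m n (L : laurent R m n) (a : C) :
  a != 0 -> mx_continuous_at (leval L) a.
Proof.
move=> a0 i j.
have -> : (fun w => leval L w i j) =
    fun w => \sum_(k < (lN L).*2.+1) w ^ (k%:Z - (lN L)%:Z) * lc L k i j.
  by apply/funext => w; rewrite summxE; apply: eq_bigr => k _; rewrite mxE.
apply: continuous_sum => k.
by apply: continuousM; [exact: continuous_exprz | exact: cst_continuous].
Qed.

Lemma mx_GL_continuous_at n (U : set C) (M : C -> 'M[C]_n) (a : C) :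
  mx_GL U M -> U a -> ~ mx_pole M a -> mx_continuous_at M a.
Proof.
move=> [merM _] Ua M_nopole i j; apply: holo_at_continuous.
have [_ holoM] := merM i j; apply: holoM => // pole_a.
by apply: M_nopole; exists i, j.
Qed.

Section InCE.
Variables (p : nat) (E0 Einf : seq C) (a : C).
Hypotheses (a_Sigma0 : Sigma0 a) (a_notin_E0 : ~ Etilde p E0 a).

Lemma in_CE_nonsingular_at n (X : obj R n) :
  in_CE p E0 Einf X -> ~ singular (@Sigma0 R) (oM0 X) a.
Proof. by case=> _ sing_E0 _ /sing_E0 /a_notin_E0. Qed.

Lemma Gamma0_unitmx n (X : obj R n) :
  in_CE p E0 Einf X -> Gamma0 a X \in unitmx.
Proof.
move=> /in_CE_nonsingular_at nonsing; rewrite unitmxE unitfE.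
by apply/eqP => det0; apply: nonsing; split; last right.
Qed.

Lemma oM0_continuous_at n (X : obj R n) :
  in_CE p E0 Einf X -> mx_continuous_at (oM0 X) a.
Proof.
move=> XCE; have nonsing := in_CE_nonsingular_at XCE.
case: XCE => [[[_ _ _ M0_GL _] _] _ _].
apply: (mx_GL_continuous_at M0_GL a_Sigma0) => pole.
by apply: nonsing; split; last left.
Qed.

Lemma Gamma0_natural n m (X : obj R n) (Y : obj R m) (f : Defs.hom R n m) :
  in_CE p E0 Einf X -> in_CE p E0 Einf Y -> is_hom p X Y f ->
  omega1 a f *m Gamma0 a X = Gamma0 a Y *m omega0 f.
Proof.
move=> XCE YCE [_ _ _ S1M0_M0S0 _].
apply: (mx_mero_eq_at open_Sigma0 a_Sigma0 S1M0_M0S0).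
  apply: mx_continuous_at_mul; last exact: oM0_continuous_at XCE.
  exact/leval_continuous_at/Sigma0_neq0.
apply: mx_continuous_at_mul; last exact: mx_continuous_at_cst.
exact: oM0_continuous_at YCE.
Qed.

End InCE.

End Gamma0.

Theorem mainTheorem11 (R : realType) (p : nat) (hp : (2 <= p)%N)
    (E0 Einf : seq R[i])
    (hE0 : forall z, z \in E0 -> 0 < `|z| < 1)
    (hEinf : forall z, z \in Einf -> 1 < `|z|)
    (a : R[i]) (ha0 : Sigma0 a) (haE : ~ Etilde p E0 a) :
  iso_tensor p E0 Einf a (Gamma0 a).
Proof.
split=> [n X | n m X Y f | // | //].
- exact: Gamma0_unitmx.
- exact: Gamma0_natural.
Qed.
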